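(* Consider the problem and the SC-SCSG algorithm described in the context, and suppose Assumptions (A2) and (A6) hold. Then at every inner iteration $k$ of epoch $s$, with $A=|\mathcal A|$ and $D=|\mathcal D_1|$, $$\mathbb{E}_{\mathcal A,\mathcal D_1}\|\hat G_k-G(x_k)\|^2\le 4\Big(\frac{\mathbb{I}(A<n)}{A}+\frac{\mathbb{I}(D<n)}{D}\Big)B_G^2\,\mathbb{E}\|x_k-\tilde x_s\|^2+2\frac{\mathbb{I}(D<n)}{D}H_1 .$$
   Context: Problem: minimize $f(x)=F(G(x))=\frac1n\sum_{i=1}^nF_i\big(\frac1n\sum_{j=1}^nG_j(x)\big)$ over $x\in\mathbb{R}^N$, where $G_j:\mathbb{R}^N\to\mathbb{R}^M$, $F_i:\mathbb{R}^M\to\mathbb{R}$, $G=\frac1n\sum_jG_j$, $F=\frac1n\sum_iF_i$, $\partial G_j(x)\in\mathbb{R}^{M\times N}$ is the Jacobian, so $\nabla f(x)=(\partial G(x))^\top\nabla F(G(x))$. For a multiset $\mathcal S$ of indices from $[n]$, $G_{\mathcal S}=\frac1{|\mathcal S|}\sum_{j\in\mathcal S}G_j$, and similarly $\partial G_{\mathcal S}$, $F_{\mathcal S}$. $\mathbb{I}(\cdot)$ is the indicator function. Algorithm (SC-SCSG): parameters $K$ (inner iterations), $S$ (epochs), step $\eta>0$, batch sizes $A\le D$, initial point $\tilde x_0$. For each epoch $s=0,\dots,S-1$: form $\mathcal D_1,\mathcal D_2$, each of $D$ indices sampled independently and uniformly from $[n]$ (independent of each other); set $\nabla\hat f_{\mathcal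 D}(\tilde x_s)=(\partial G_{\mathcal D_1}(\tilde x_s))^\top\nabla F_{\mathcal D_2}(G_{\mathcal D_1}(\tilde x_s))$ and $x_0=\tilde x_s$. For $k=0,\dots,K-1$: sample a mini-batch $\mathcal A$ of $A$ indices from $[n]$ (independent of $\mathcal D$), set $\hat G_k=G_{\mathcal A}(x_k)-G_{\mathcal A}(\tilde x_s)+G_{\mathcal D_1}(\tilde x_s)$; draw $i_k,j_k$ independently uniformly from $[n]$; set $\nabla\tilde f_k=(\partial G_{j_k}(x_k))^\top\nabla F_{i_k}(\hat G_k)-(\partial G_{j_k}(\tilde x_s))^\top\nabla F_{i_k}(G_{\mathcal D_1}(\tilde x_s))+\nabla\hat f_{\mathcal D}(\tilde x_s)$ and $x_{k+1}=x_k-\eta\nabla\tilde f_k$. Then $\tilde x_{s+1}=x_K$. Within an epoch $x_k$ denotes the $k$-th inner iterate of epoch $s$. (A2) For all $j$ and $x,y\in\mathbb{R}^N$: $\|\partial G_j(x)\|\le B_G$ (so $\|G_j(x)-G_j(y)\|\le B_G\|x-y\|$) and $\|\partial G_j(x)-\partial G_j(y)\|\le L_G\|x-y\|$. (A6) For all $x\in\mathbb{R}^N,y\in\mathbb{R}^M$: $\frac1n\sum_{i=1}^n\|G(x)-G_i(x)\|^2\le H_1$ and $\frac1{n^2}\sum_{i,j=1}^n\|(\partial G(x))^\top\nabla F(y)-(\partial G_j(x))^\top\nabla F_i(y)\|^2\le H_2$. *)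

From HB Require Import structures.
From mathcomp Require Import all_boot all_order all_algebra.
From mathcomp Require Import all_classical all_reals all_analysis.
Set Implicit Arguments. Unset Strict Implicit. Unset Printing Implicit Defensive.
Import Order.TTheory GRing.Theory Num.Theory.
Local Open Scope ring_scope.

Section SCSG.
Variable R : realType.

Definition sqnorm (p : nat) (v : 'rV[R]_p) : R := \sum_(i < p) v 0 i ^+ 2.
Definition enorm (p : nat) (v : 'rV[R]_p) : R := Num.sqrt (sqnorm v).

(* operator-norm bound (Euclidean): ||P|| <= B, i.e. ||P v|| <= B ||v||
   for every v (v written as a row, so P v is v *m P^T) *)
Definition opnorm_le (m p : nat) (P : 'M[R]_(m, p)) (B : R) : Prop :=
  forall v : 'rV[R]_p, enorm (v *m P^T) <= B * enorm v.

(* Jacobian in the paper's convention: an m x p matrix for f : R^p -> R^m *)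
Definition Jac (p m : nat) (f : 'rV[R]_p -> 'rV[R]_m) (x : 'rV[R]_p) : 'M[R]_(m, p) :=
  (jacobian f x)^T.

Definition grad (m : nat) (f : 'rV[R]_m -> R) (y : 'rV[R]_m) : 'rV[R]_m :=
  \row_(i < m) 'D_(delta_mx 0 i) f y.

Definition bavg (n : nat) (V : lmodType R) (S : seq 'I_n) (f : 'I_n -> V) : V :=
  (size S)%:R^-1 *: \sum_(j <- S) f j.

Variables (n N M : nat) (G : 'I_n -> 'rV[R]_N -> 'rV[R]_M)
          (F : 'I_n -> 'rV[R]_M -> R).

Definition G_S (S : seq 'I_n) (x : 'rV[R]_N) : 'rV[R]_M := bavg S (fun j => G j x).
Definition dG_S (S : seq 'I_n) (x : 'rV[R]_N) : 'M[R]_(M, N) := bavg S (fun j => Jac (G j) x).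
Definition F_S (S : seq 'I_n) (y : 'rV[R]_M) : R := bavg S (fun i => F i y).

Definition Gbar (x : 'rV[R]_N) : 'rV[R]_M := n%:R^-1 *: \sum_(j < n) G j x.
Definition Fbar (y : 'rV[R]_M) : R := n%:R^-1 * \sum_(i < n) F i y.

(* (dG_D1(xt))^T grad F_D2 (G_D1(xt)), written as a row vector *)
Definition grad_est (D1 D2 : seq 'I_n) (xt : 'rV[R]_N) : 'rV[R]_N :=
  grad (F_S D2) (G_S D1 xt) *m dG_S D1 xt.

Definition Ghat (SA D1 : seq 'I_n) (xt x : 'rV[R]_N) : 'rV[R]_M :=
  G_S SA x - G_S SA xt + G_S D1 xt.

Definition inner_step (eta : R) (D1 D2 : seq 'I_n) (xt : 'rV[R]_N)
    (x : 'rV[R]_N) (w : seq 'I_n * 'I_n * 'I_n) : 'rV[R]_N :=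
  let: (SA, i, j) := w in
  x - eta *: (grad (F i) (Ghat SA D1 xt x) *m Jac (G j) x
              - grad (F i) (G_S D1 xt) *m Jac (G j) xt
              + grad_est D1 D2 xt).

Definition iterate (eta : R) (D1 D2 : seq 'I_n) (xt : 'rV[R]_N)
    (ws : seq (seq 'I_n * 'I_n * 'I_n)) : 'rV[R]_N :=
  foldl (inner_step eta D1 D2 xt) xt ws.

End SCSG.

(* Expectation over a mini-batch of m indices drawn independently and
   uniformly from [n] (with replacement); by the convention implicit in the
   indicator I(m < n) of the paper, a batch of size m = n is the full set. *)
Definition Ebatch (R : realType) (n m : nat) (P : seq 'I_n -> R) : R :=
  if (m < n)%N then
    ((n ^ m)%:R)^-1 * \sum_(b : {ffun 'I_m -> 'I_n}) P [seq b t | t <- enum 'I_m]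
  else P (enum 'I_n).

Definition Eidx (R : realType) (n : nat) (P : 'I_n -> R) : R :=
  n%:R^-1 * \sum_(i < n) P i.

Fixpoint Esteps (R : realType) (n A k : nat)
    (P : seq (seq 'I_n * 'I_n * 'I_n) -> R) : R :=
  match k with
  | 0 => P [::]
  | k'.+1 => @Esteps R n A k' (fun ws =>
        @Ebatch R n A (fun a => @Eidx R n (fun i => @Eidx R n (fun j =>
          P (rcons ws (a, i, j))))))
  end.

Definition Ind (R : realType) (b : bool) : R := if b then 1 else 0.

Arguments Ebatch {R} n m P.
Arguments Eidx {R} n P.
Arguments Esteps {R} n A k P.

From HB Require Import structures.
From mathcomp Require Import all_boot all_order all_algebra.
From mathcomp Require Import all_classical all_reals all_analysis.
From mathcomp Require Import ring lra.
Import Order.TTheory GRing.Theory Num.Theory.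
Local Open Scope ring_scope.
Set Implicit Arguments.
Unset Strict Implicit.
Unset Printing Implicit Defensive.

(* Split [Ghat_k - G(x_k)] as [(G_A(x_k) - G_A(xt)) - (G(x_k) - G(xt))]
   plus [G_D1(xt) - G(xt)] and use [|u + v|^2 <= 2|u|^2 + 2|v|^2].  Each
   summand is the deviation from the population mean of an average over a
   batch of independent uniform indices; its expected square is the population
   dispersion divided by the batch size, because the cross terms of distinct
   draws vanish, and it is 0 for the full batch.  By (A2) the dispersion of
   [G_j(x_k) - G_j(xt)] is at most [B_G^2 |x_k - xt|^2], and by (A6) that of
   [G_j(xt)] is at most [H1].  The remaining expectations (over D1, D2 and the
   earlier inner samples) are only used through positivity, linearity and
   normalisation.  The bound obtained, with [2] in place of [4 (...)] in front
   of the [B_G] term, is slightly sharper than the stated one. *)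

Section Averaging.
Variable R : realType.

Record averaging (T : Type) (E : (T -> R) -> R) : Prop := Averaging {
  averaging_le : forall P Q, (forall t, P t <= Q t) -> E P <= E Q;
  averaging_lin : forall c d P Q,
    E (fun t => c * P t + d * Q t) = c * E P + d * E Q;
  averaging1 : E (fun=> 1) = 1 }.

Variables (T : Type) (E : (T -> R) -> R).
Hypothesis avE : averaging E.

Lemma averaging_ext P Q : (forall t, P t = Q t) -> E P = E Q.
Proof.
by move=> PQ; apply/le_anti; rewrite !(averaging_le avE) // => t; rewrite PQ.
Qed.

Lemma averaging_lincst c d P : E (fun t => c * P t + d) = c * E P + d.
Proof.
rewrite -[d in RHS]mulr1 -(averaging1 avE) -(averaging_lin avE).
by apply: averaging_ext => t; rewrite mulr1.
Qed.

Lemma averaging_cst d : E (fun=> d) = d.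
Proof.
by have := averaging_lincst 0 d (fun=> 0); rewrite !mul0r !add0r.
Qed.

Lemma averaging_ge0 P : (forall t, 0 <= P t) -> 0 <= E P.
Proof. by move=> P0; rewrite -(averaging_cst 0); apply: (averaging_le avE). Qed.

End Averaging.

Lemma averaging_nested (R : realType) (T1 T2 T : Type)
    (E1 : (T1 -> R) -> R) (E2 : (T2 -> R) -> R) (f : T1 -> T2 -> T) :
  averaging E1 -> averaging E2 ->
  averaging (fun P => E1 (fun s => E2 (fun t => P (f s t)))).
Proof.
move=> av1 av2; split.
- move=> P Q PQ; apply: (averaging_le av1) => s.
  by apply: (averaging_le av2) => t.
- move=> c d P Q; rewrite -(averaging_lin av1).
  by apply: (averaging_ext av1) => s; rewrite (averaging_lin av2).
- by rewrite -[RHS](averaging1 av1); apply: (averaging_ext av1) => s; rewrite (averaging1 av2).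
Qed.

Lemma Ebatch_averaging (R : realType) n m : averaging (@Ebatch R n m).
Proof.
have [mn|nm] := ltnP m n; last first.
  split => [P Q PQ|c d P Q|]; rewrite /Ebatch ltnNge nm //=; exact: PQ.
split => [P Q PQ|c d P Q|]; rewrite /Ebatch mn.
- by rewrite ler_wpM2l ?invr_ge0 ?ler0n // ler_sum.
- by rewrite big_split /= -!mulr_sumr mulrDr !mulrA ![_^-1 * _]mulrC.
- rewrite sumr_const card_ffun !card_ord mulVf // pnatr_eq0 expn_eq0 negb_and.
  by rewrite -lt0n (leq_ltn_trans _ mn).
Qed.

Lemma Eidx_averaging (R : realType) n : (0 < n)%N -> averaging (@Eidx R n).
Proof.
rewrite /Eidx => n0; split.
- by move=> P Q PQ; rewrite ler_wpM2l ?invr_ge0 ?ler0n // ler_sum.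
- move=> c d P Q; rewrite big_split /= -!mulr_sumr mulrDr.
  by rewrite !mulrA ![_^-1 * _]mulrC.
- by rewrite sumr_const card_ord mulVf // pnatr_eq0 -lt0n.
Qed.

Lemma Esteps_averaging (R : realType) n A k :
  (0 < n)%N -> averaging (@Esteps R n A k).
Proof.
move=> n0; have avI := Eidx_averaging R n0.
have avStep : averaging (fun P : seq 'I_n * 'I_n * 'I_n -> R =>
    Ebatch n A (fun a => Eidx n (fun i => Eidx n (fun j => P (a, i, j))))).
  exact: averaging_nested (fun a ij => (a, ij.1, ij.2)) (Ebatch_averaging R n A)
    (averaging_nested pair avI avI).
elim: k => [|k IH]; first by split => // P Q PQ; exact: PQ.
exact: averaging_nested (fun ws w => rcons ws w) IH avStep.
Qed.

Section SquaredNorm.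
Variables (R : realType) (M : nat).
Implicit Types (u v : 'rV[R]_M).

Lemma sqnorm_ge0 v : 0 <= sqnorm v.
Proof. by apply: sumr_ge0 => i _; rewrite sqr_ge0. Qed.

Lemma sqnorm0 : sqnorm (0 : 'rV[R]_M) = 0.
Proof. by apply: big1 => i _; rewrite mxE expr0n. Qed.

Lemma sqnormZ a v : sqnorm (a *: v) = a ^+ 2 * sqnorm v.
Proof. by rewrite /sqnorm mulr_sumr; apply: eq_bigr => i _; rewrite mxE exprMn. Qed.

Lemma sqnormN v : sqnorm (- v) = sqnorm v.
Proof. by rewrite -scaleN1r sqnormZ sqrrN expr1n mul1r. Qed.

Lemma sqnormD_le u v : sqnorm (u + v) <= 2 * sqnorm u + 2 * sqnorm v.
Proof.
rewrite /sqnorm !mulr_sumr -big_split /=; apply: ler_sum => i _; rewrite mxE.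
by have := sqr_ge0 (u 0 i - v 0 i); nra.
Qed.

End SquaredNorm.

Lemma sqnorm_le_of_enorm_le (R : realType) p q (u : 'rV[R]_p) (w : 'rV[R]_q) B :
  enorm u <= B * enorm w -> sqnorm u <= B ^+ 2 * sqnorm w.
Proof.
move=> uw; rewrite -(sqr_sqrtr (sqnorm_ge0 u)) -(sqr_sqrtr (sqnorm_ge0 w)) -exprMn.
have u0 : 0 <= enorm u by apply: sqrtr_ge0.
by rewrite lerXn2r ?nnegrE // (le_trans u0).
Qed.

Section Mean.
Variables (R : realType) (n : nat).

Definition mean (V : lmodType R) (v : 'I_n -> V) : V := n%:R^-1 *: \sum_j v j.

Definition dispersion M (v : 'I_n -> 'rV[R]_M) : R :=
  Eidx n (fun j => sqnorm (v j - mean v)).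

Lemma bavgB (V : lmodType R) (S : seq 'I_n) (f g : 'I_n -> V) :
  bavg S (fun j => f j - g j) = bavg S f - bavg S g.
Proof. by rewrite /bavg sumrB scalerBr. Qed.

Lemma bavg_enum (V : lmodType R) (f : 'I_n -> V) : bavg (enum 'I_n) f = mean f.
Proof. by rewrite /bavg size_enum_ord big_enum. Qed.

Lemma meanB (V : lmodType R) (f g : 'I_n -> V) :
  mean (fun j => f j - g j) = mean f - mean g.
Proof. by rewrite -!bavg_enum bavgB. Qed.

Lemma bavg_map m (V : lmodType R) (b : 'I_m -> 'I_n) (f : 'I_n -> V) :
  bavg [seq b t | t <- enum 'I_m] f = m%:R^-1 *: \sum_(t < m) f (b t).
Proof. by rewrite /bavg size_map size_enum_ord big_map big_enum. Qed.

Hypothesis n_gt0 : (0 < n)%N.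

Lemma sum_sub_mean (V : lmodType R) (v : 'I_n -> V) : \sum_j (v j - mean v) = 0.
Proof.
rewrite sumrB sumr_const card_ord -scaler_nat /mean scalerA mulfV ?scale1r ?subrr //.
by rewrite pnatr_eq0 -lt0n.
Qed.

Lemma sum_sqr_sub_mean_le (a : 'I_n -> R) :
  \sum_j (a j - n%:R^-1 * \sum_i a i) ^+ 2 <= \sum_j a j ^+ 2.
Proof.
set c := n%:R^-1 * \sum_i a i.
have sum_a : \sum_i a i = n%:R * c by rewrite mulrA mulfV ?mul1r // pnatr_eq0 -lt0n.
(* [\sum_j (a j - c)^2 = \sum_j a j^2 - n c^2] because [\sum_j a j = n c]. *)
rewrite (eq_bigr (fun j => a j ^+ 2 + (- (2 * c) * a j + c ^+ 2))); last by move=> j _; ring.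
rewrite big_split /= big_split /= -mulr_sumr sumr_const card_ord sum_a -mulr_natr.
by have := mulr_ge0 (ler0n R n) (sqr_ge0 c); nra.
Qed.

Lemma dispersion_le M (v : 'I_n -> 'rV[R]_M) :
  dispersion v <= Eidx n (fun j => sqnorm (v j)).
Proof.
rewrite ler_wpM2l ?invr_ge0 ?ler0n // /sqnorm exchange_big [leRHS]exchange_big /=.
apply: ler_sum => i _; rewrite -[leRHS]/(\sum_j v j 0 i ^+ 2).
rewrite (eq_bigr (fun j => (v j 0 i - n%:R^-1 * \sum_l v l 0 i) ^+ 2)).
  exact: sum_sqr_sub_mean_le.
by move=> j _; rewrite /mean !mxE summxE.
Qed.

End Mean.

Section Sampling.
Variables (R : realType) (m n : nat).

Lemma sum_ffun_mul_eval (f g : 'I_n -> R) (t s : 'I_m) :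
  \sum_(b : {ffun 'I_m -> 'I_n}) f (b t) * g (b s) =
  \prod_(r < m) \sum_(j < n) (if r == t then f j else 1) * (if r == s then g j else 1).
Proof.
rewrite bigA_distr_bigA; apply: eq_bigr => b _.
by rewrite big_split /= -!big_mkcond /= !big_pred1_eq.
Qed.

Lemma sum_ffun_mul_eval_centered (w : 'I_n -> R) (t s : 'I_m) :
  \sum_j w j = 0 ->
  \sum_(b : {ffun 'I_m -> 'I_n}) w (b t) * w (b s) =
  if t == s then (n ^ m.-1)%:R * \sum_j w j ^+ 2 else 0.
Proof.
move=> w0; rewrite sum_ffun_mul_eval (bigD1 t) //= eqxx.
case: eqP => [<-|/eqP nts].
  rewrite mulrC; congr (_ * _).
  rewrite (eq_bigr (fun _ => n%:R)); last first.
    by move=> r rt; rewrite (negPf rt) sumr_const card_ord mulr1.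
  by rewrite prodr_const cardC1 card_ord natrX.
by under eq_bigr do rewrite mulr1; rewrite w0 mul0r.
Qed.

Lemma sum_ffun_sqr_sum_centered (w : 'I_n -> R) : \sum_j w j = 0 ->
  \sum_(b : {ffun 'I_m -> 'I_n}) (\sum_(t < m) w (b t)) ^+ 2 =
  (m * n ^ m.-1)%:R * \sum_j w j ^+ 2.
Proof.
move=> w0.
under eq_bigr do rewrite expr2 big_distrl /=; under eq_bigr do
  under eq_bigr do rewrite big_distrr /=.
rewrite exchange_big /= (eq_bigr (fun=> (n ^ m.-1)%:R * \sum_j w j ^+ 2)).
  by rewrite sumr_const card_ord natrM -mulrA [RHS]mulr_natl.
move=> t _; rewrite exchange_big /= (bigD1 t) //= sum_ffun_mul_eval_centered // eqxx.
rewrite [X in _ + X]big1 ?addr0 // => s st.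
by rewrite sum_ffun_mul_eval_centered // eq_sym (negPf st).
Qed.

Lemma sum_ffun_sqnorm_sum_centered M (u : 'I_n -> 'rV[R]_M) : \sum_j u j = 0 ->
  \sum_(b : {ffun 'I_m -> 'I_n}) sqnorm (\sum_(t < m) u (b t)) =
  (m * n ^ m.-1)%:R * \sum_j sqnorm (u j).
Proof.
move=> u0; rewrite /sqnorm exchange_big [in RHS]exchange_big mulr_sumr /=.
apply: eq_bigr => i _; under eq_bigr do rewrite summxE.
rewrite (sum_ffun_sqr_sum_centered (w := fun j => u j 0 i)) //.
by have := congr1 (fun v : 'rV[R]_M => v 0 i) u0; rewrite /= summxE mxE.
Qed.

Lemma Ebatch_sqnorm_bavg_sub_mean M (v : 'I_n -> 'rV[R]_M) :
  (0 < m)%N -> (0 < n)%N ->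
  Ebatch n m (fun S => sqnorm (bavg S v - mean v)) =
  Ind R (m < n)%N / m%:R * dispersion v.
Proof.
move=> m0 n0; rewrite /Ebatch /Ind; case: ifPn => mn; last first.
  by rewrite bavg_enum subrr sqnorm0 !mul0r.
set u := fun j => v j - mean v.
have dev b : bavg [seq b t | t <- enum 'I_m] v - mean v =
    m%:R^-1 *: \sum_(t < m) u (b t).
  rewrite bavg_map /u sumrB sumr_const card_ord scalerBr -[mean v *+ m]scaler_nat scalerA.
  by rewrite mulVf ?scale1r // pnatr_eq0 -lt0n.
under eq_bigr do rewrite dev sqnormZ.
rewrite -mulr_sumr sum_ffun_sqnorm_sum_centered ?sum_sub_mean // /dispersion /Eidx.
have -> : (n ^ m = n * n ^ m.-1)%N by rewrite -expnS prednK.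
have n_neq0 : n%:R != 0 :> R by rewrite pnatr_eq0 -lt0n.
have m_neq0 : m%:R != 0 :> R by rewrite pnatr_eq0 -lt0n.
have nm_neq0 : (n ^ m.-1)%:R != 0 :> R by rewrite pnatr_eq0 -lt0n expn_gt0 n0.
rewrite !natrM; field.
by rewrite n_neq0 nm_neq0 m_neq0.
Qed.

End Sampling.

Lemma Ind_div_ge0 (R : realType) b k : 0 <= Ind R b / k%:R.
Proof. by rewrite /Ind; case: b; rewrite ?mul0r // mul1r invr_ge0 ler0n. Qed.

Section Estimator.
Variables (R : realType) (n N M : nat) (G : 'I_n -> 'rV[R]_N -> 'rV[R]_M).
Hypothesis n_gt0 : (0 < n)%N.

Lemma Ghat_sub_Gbar SA D1 xt x :
  Ghat G SA D1 xt x - Gbar G x =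
  (G_S G SA x - G_S G SA xt - (Gbar G x - Gbar G xt)) + (G_S G D1 xt - Gbar G xt).
Proof. by rewrite /Ghat addrACA -opprD subrK. Qed.

Lemma Ebatch_sqnorm_Ghat_sub_Gbar_le B A D1 xt x : (0 < A)%N ->
  (forall j x y, enorm (G j x - G j y) <= B * enorm (x - y)) ->
  Ebatch n A (fun SA => sqnorm (Ghat G SA D1 xt x - Gbar G x)) <=
  2 * (Ind R (A < n)%N / A%:R * B ^+ 2) * sqnorm (x - xt)
  + 2 * sqnorm (G_S G D1 xt - Gbar G xt).
Proof.
move=> A0 G_lip; have avA := Ebatch_averaging R n A.
set v := fun j => G j x - G j xt.
apply: le_trans (_ : Ebatch n A (fun SA =>
    2 * sqnorm (bavg SA v - mean v) + 2 * sqnorm (G_S G D1 xt - Gbar G xt)) <= _).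
  apply: (averaging_le avA) => SA.
  by rewrite Ghat_sub_Gbar bavgB meanB; apply: sqnormD_le.
rewrite (averaging_lincst avA) Ebatch_sqnorm_bavg_sub_mean // lerD2r.
set cA := Ind R (A < n)%N / A%:R.
rewrite -[leRHS]mulrA ler_pM2l // -mulrA ler_wpM2l ?Ind_div_ge0 //.
apply: le_trans (dispersion_le n_gt0 v) _.
rewrite -[leRHS](averaging_cst (Eidx_averaging R n_gt0)).
apply: (averaging_le (Eidx_averaging R n_gt0)) => j.
exact: sqnorm_le_of_enorm_le (G_lip j x xt).
Qed.

Lemma Ebatch_sqnorm_G_S_sub_Gbar_le D H1 xt : (0 < D)%N ->
  n%:R^-1 * \sum_(i < n) sqnorm (Gbar G xt - G i xt) <= H1 ->
  Ebatch n D (fun D1 => sqnorm (G_S G D1 xt - Gbar G xt)) <=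
  Ind R (D < n)%N / D%:R * H1.
Proof.
move=> D0 H1xt.
rewrite (Ebatch_sqnorm_bavg_sub_mean (fun j => G j xt)) //.
apply: ler_wpM2l; first exact: Ind_div_ge0.
rewrite /dispersion /Eidx (eq_bigr (fun i => sqnorm (Gbar G xt - G i xt))) //.
by move=> j _; rewrite -sqnormN opprB.
Qed.

End Estimator.

Unset Implicit Arguments.

Theorem lemma3 (R : realType) (n N M : nat)
    (G : 'I_n -> 'rV[R]_N -> 'rV[R]_M) (F : 'I_n -> 'rV[R]_M -> R)
    (B_G L_G H1 H2 eta : R) (K A D : nat) (xt : 'rV[R]_N) (k : nat) :
  (0 < n)%N -> (0 < A)%N -> (A <= D)%N -> (D <= n)%N -> 0 < eta ->
  (forall j x, differentiable (G j) x) ->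
  (forall i y, differentiable (F i) y) ->
  (* (A2) *)
  (forall j x, opnorm_le (Jac (G j) x) B_G) ->
  (forall j x y, enorm (G j x - G j y) <= B_G * enorm (x - y)) ->
  (forall j x y, opnorm_le (Jac (G j) x - Jac (G j) y) (L_G * enorm (x - y))) ->
  (* (A6) *)
  (forall x, n%:R^-1 * \sum_(i < n) sqnorm (Gbar G x - G i x) <= H1) ->
  (forall x y, (n%:R ^+ 2)^-1 * \sum_(i < n) \sum_(j < n)
      sqnorm (grad (Fbar F) y *m Jac (Gbar G) x - grad (F i) y *m Jac (G j) x)
    <= H2) ->
  (k < K)%N ->
  Ebatch n D (fun D1 => Ebatch n D (fun D2 => Esteps n A k (fun ws =>
    Ebatch n A (fun SA =>
      sqnorm (Ghat G SA D1 xt (iterate G F eta D1 D2 xt ws)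
              - Gbar G (iterate G F eta D1 D2 xt ws))))))
  <= 4 * (Ind R (A < n)%N / A%:R + Ind R (D < n)%N / D%:R) * B_G ^+ 2 *
       Ebatch n D (fun D1 => Ebatch n D (fun D2 => Esteps n A k (fun ws =>
         sqnorm (iterate G F eta D1 D2 xt ws - xt))))
     + 2 * (Ind R (D < n)%N / D%:R) * H1.
Proof.
move=> n_gt0 A_gt0 AD _ _ _ _ _ G_lip _ G_var _ _.
have avD := Ebatch_averaging R n D; have avK := Esteps_averaging R A k n_gt0.
set cA := Ind R (A < n)%N / A%:R; set cD := Ind R (D < n)%N / D%:R.
set E := Ebatch n D (fun D1 => Ebatch n D (fun D2 => Esteps n A k (fun ws =>
  sqnorm (iterate G F eta D1 D2 xt ws - xt)))).
have E_ge0 : 0 <= E.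
  do 2![apply: (averaging_ge0 avD) => ?].
  by apply: (averaging_ge0 avK) => ?; apply: sqnorm_ge0.
have G_S_dev := Ebatch_sqnorm_G_S_sub_Gbar_le n_gt0 (leq_trans A_gt0 AD) (G_var xt).
apply: le_trans (_ : 2 * (cA * B_G ^+ 2) * E +
    2 * Ebatch n D (fun D1 => sqnorm (G_S G D1 xt - Gbar G xt)) <= _).
  rewrite /E -(averaging_lin avD); apply: (averaging_le avD) => D1.
  rewrite -(averaging_lincst avD); apply: (averaging_le avD) => D2.
  rewrite -(averaging_lincst avK); apply: (averaging_le avK) => ws.
  exact: Ebatch_sqnorm_Ghat_sub_Gbar_le.
apply: lerD; last by rewrite -mulrA ler_pM2l ?ltr0n.
have cA_ge0 : 0 <= cA := Ind_div_ge0 R _ A.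
have cD_ge0 : 0 <= cD := Ind_div_ge0 R _ D.
have := mulr_ge0 (mulr_ge0 cA_ge0 (sqr_ge0 B_G)) E_ge0.
have := mulr_ge0 (mulr_ge0 cD_ge0 (sqr_ge0 B_G)) E_ge0.
nra.
Qed.
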